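(* Let $X$ be an $E\mathcal M$-simplicial set. Then $X$ is a $*$-module if and only if $X$ is mild.
   Context: $\omega=\{1,2,3,\dots\}$ and $\mathcal M$ is the monoid of injective maps $\omega\to\omega$ under composition. For $A\subset\omega$, $\mathcal M_A\subset\mathcal M$ is the submonoid of injections fixing $A$ elementwise; $A$ is co-infinite if $\omega\setminus A$ is infinite. $E\mathcal M$ is the simplicial monoid with $(E\mathcal M)_n=\mathcal M^{1+n}=\mathrm{maps}(\{0,\dots,n\},\mathcal M)$, pointwise multiplication, simplicial structure maps by precomposition. An $E\mathcal M$-simplicial set is a simplicial set with a left $E\mathcal M$-action. For a set $S$, $E\mathrm{Inj}(S,\omega)$ is the simplicial set whose $m$-simplices are tuples $(f_0,\dots,f_m)$ of injections $S\to\omega$ (structure maps by precomposition in the index), with left $E\mathcal M$-action by postcomposition. For $x\in X_n$, $A\subset\omega$, $0\le k\le n$, $x$ is $k$-supported on $A$ if $i_k(u).x=x$ for all $u\in\mathcal M_A$, where $i_k\colon\mathcal M\to\mathcal M^{1+n}$ includes into the $(1+k)$-th factor. $X$ is mild if for every $n$, every $x\in X_n$ and every $0\le k\le n$ there is a co-infinite $A\subset\omega$ such that $x$ is $k$-supported on $A$. Operadic product: for $E\mathcal M$-simplicial sets $X_1,\dots,X_n$, let $E\mathrm{Inj}(n\times\omega,\omega)\times_{E\mathcal M^n}X_1\times\dots\times X_n$ be the quotient of $E\mathrm{Inj}(n\times\omega,\omega)\times X_1\times\dots\times X_n$ by the equivalence relation generated on $m$-simplices by $(f_0,\dots,f_m;u_1.x_1,\dots,u_n.x_n)\sim(f_0\circ(u_1^{(0)}\amalg\dots\amalg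 u_n^{(0)}),\dots,f_m\circ(u_1^{(m)}\amalg\dots\amalg u_n^{(m)});x_1,\dots,x_n)$ for all $u_i=(u_i^{(0)},\dots,u_i^{(m)})\in(E\mathcal M)_m$; it carries the $E\mathcal M$-action by postcomposition on the first factor. There is a natural map $\Phi$ to $X_1\times\dots\times X_n$ given on $m$-simplices by $\Phi[f_0,\dots,f_m;x_1,\dots,x_n]=((f_0\iota_1,\dots,f_m\iota_1).x_1,\dots,(f_0\iota_n,\dots,f_m\iota_n).x_n)$, where $\iota_j(t)=(j,t)$. An $E\mathcal M$-simplicial set $X$ is a $*$-module if $\Phi\colon E\mathrm{Inj}(2\times\omega,\omega)\times_{E\mathcal M^2}(X\times * )\to X\times *\cong X$ is an isomorphism ($*$ the terminal $E\mathcal M$-simplicial set). *)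

(* (ordinals 'I_(n.+1) index the vertices {0,...,n}). *)
From Stdlib Require Import Relation_Operators.
From mathcomp Require Import all_boot.
Set Implicit Arguments. Unset Strict Implicit. Unset Printing Implicit Defensive.

(* omega = {1,2,3,...} is represented by nat via t |-> t+1 (a relabelling
   bijection; injections, fixed sets and co-infiniteness are transported). *)

Definition injfun (A B : Type) := {f : A -> B | injective f}.

Lemma comp_injective (A B C : Type) (g : B -> C) (f : A -> B) :
  injective g -> injective f -> injective (fun a => g (f a)).
Proof. by move=> hg hf a b /hg /hf. Qed.

Definition comp_inj (A B C : Type) (g : injfun B C) (f : injfun A B) : injfun A C :=
  exist _ (fun a => sval g (sval f a)) (comp_injective (svalP g) (svalP f)).

Lemma id_injective (A : Type) : injective (fun a : A => a).
Proof. by []. Qed.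

Definition id_inj (A : Type) : injfun A A := exist _ (fun a => a) (@id_injective A).

Definition M := injfun nat nat.
Definition idM : M := id_inj nat.
Definition mulM (u v : M) : M := comp_inj u v.

Definition monotone m n (a : 'I_m.+1 -> 'I_n.+1) :=
  forall i j : 'I_m.+1, i <= j -> a i <= a j.

(** EM-simplicial sets: simplicial sets (contravariant functors on Delta,
    structure maps smap a : X_n -> X_m for monotone a : [m] -> [n]) with a
    left action of (E M)_n = maps([n], M) on X_n, compatible with the
    simplicial structure (structure maps of E M are precomposition). *)
Record EMsSet := {
  ob :> nat -> Type;
  smap : forall m n, ('I_m.+1 -> 'I_n.+1) -> ob n -> ob m;
  smap_id : forall n (x : ob n), smap (fun i => i) x = x;
  smap_comp : forall m n p (a : 'I_m.+1 -> 'I_n.+1) (b : 'I_n.+1 -> 'I_p.+1),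
      monotone a -> monotone b ->
      forall x : ob p, smap a (smap b x) = smap (fun i => b (a i)) x;
  act : forall n, ('I_n.+1 -> M) -> ob n -> ob n;
  act_id : forall n (x : ob n), act (fun _ => idM) x = x;
  act_mul : forall n (u v : 'I_n.+1 -> M) (x : ob n),
      act u (act v x) = act (fun j => mulM (u j) (v j)) x;
  act_nat : forall m n (a : 'I_m.+1 -> 'I_n.+1), monotone a ->
      forall (u : 'I_n.+1 -> M) (x : ob n),
      smap a (act u x) = act (fun i => u (a i)) (smap a x)
}.

Definition coinfinite (A : nat -> Prop) := forall N, exists t, N <= t /\ ~ A t.
Definition fixes (A : nat -> Prop) (u : M) := forall t, A t -> sval u t = t.

Definition incl n (k : 'I_n.+1) (u : M) : 'I_n.+1 -> M :=
  fun j => if j == k then u else idM.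

Definition k_supported (X : EMsSet) n (x : X n) (k : 'I_n.+1) (A : nat -> Prop) :=
  forall u : M, fixes A u -> @act X n (incl k u) x = x.

Definition mild (X : EMsSet) :=
  forall n (x : X n) (k : 'I_n.+1),
    exists (A : nat -> Prop), coinfinite A /\ k_supported x k A.

(** The operadic product E Inj(2 x omega, omega) x_{EM^2} (X x star).
    2 x omega is 'I_2 * nat; the factor j = 1,2 is ord0, ord_max. *)
Definition Inj2 := injfun ('I_2 * nat) nat.

Definition iota1_fun (t : nat) : 'I_2 * nat := (ord0, t).
Lemma iota1_injective : injective iota1_fun.
Proof. by move=> s t [->]. Qed.
Definition iota1 : injfun nat ('I_2 * nat) := exist _ iota1_fun iota1_injective.

Definition coprod_fun (u1 u2 : M) (p : 'I_2 * nat) : 'I_2 * nat :=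
  (p.1, if p.1 == ord0 then sval u1 p.2 else sval u2 p.2).
Lemma coprod_injective (u1 u2 : M) : injective (coprod_fun u1 u2).
Proof.
move=> [i s] [j t] [/= eij]; rewrite -eij; case: (i == ord0) => h.
  by rewrite (svalP u1 _ _ h).
by rewrite (svalP u2 _ _ h).
Qed.
Definition coprod (u1 u2 : M) : injfun ('I_2 * nat) ('I_2 * nat) :=
  exist _ (coprod_fun u1 u2) (@coprod_injective u1 u2).

(* m-simplices of E Inj(2 x omega, omega) x X x * (before the quotient);
   the terminal EM-simplicial set star is unit in every degree, trivial action *)
Definition PreProd (X : EMsSet) m := (('I_m.+1 -> Inj2) * X m * unit)%type.

(* generating relation:
   (f; u1.x, u2.star) ~ (f o (u1 amalg u2); x, star), with u2.star = star *)
Definition gen_rel (X : EMsSet) m (y1 y2 : PreProd X m) : Prop :=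
  exists (f : 'I_m.+1 -> Inj2) (u1 u2 : 'I_m.+1 -> M) (x : X m),
    y1 = (f, @act X m u1 x, tt) /\
    y2 = (fun j => comp_inj (f j) (coprod (u1 j) (u2 j)), x, tt).

Definition prod_equiv (X : EMsSet) m : PreProd X m -> PreProd X m -> Prop :=
  clos_refl_sym_trans (PreProd X m) (@gen_rel X m).

(* Phi on representatives: [f; x, star] |-> (f_0 iota_1, ..., f_m iota_1).x *)
Definition Phi (X : EMsSet) m (y : PreProd X m) : X m :=
  @act X m (fun j => comp_inj (y.1.1 j) iota1) y.1.2.

(* X is a star-module: the induced map Phi on the quotient is an isomorphism,
   i.e. bijective in every simplicial degree (Phi is a map of
   EM-simplicial sets, so levelwise bijectivity = isomorphism). *)
Definition star_module (X : EMsSet) :=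
  forall m,
    (forall x : X m, exists y : PreProd X m, Phi y = x) /\
    (forall y y' : PreProd X m, Phi y = Phi y' -> prod_equiv y y').

From Stdlib Require Import Relation_Operators ClassicalEpsilon.
From Stdlib Require Import FunctionalExtensionality ProofIrrelevance.
From mathcomp Require Import all_boot.
Set Implicit Arguments. Unset Strict Implicit. Unset Printing Implicit Defensive.

(** If
    [x = Phi [f; x']] then [x] is [k]-supported on the image of [f_k (0, _)], whose complement
    contains the image of [f_k (1, _)].  Conversely, when [X] is mild a simplex [z] has a
    co-infinite support at all vertices simultaneously, and [a.z] only depends on the restriction
    of [a] to that support (factor [a] through a bijection extending it).  Hence [Phi [s; x] = x]
    as soon as [s (0, _)] fixes a support of [x], and every [[p; z]] is equivalent to a normal
    form [[K; Phi [p; z]]] where [K (0, _)] fixes a support of [Phi [p; z]].  Supports are closed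
    under intersection, and two normal forms [[K; y]], [[L; y]] fixing a common support are
    connected through a third one, [[N; y]], which has a common refinement with each of them
    because its free values interleave free values of [K] and of [L]. *)

Lemma injfun_ext (A B : Type) (u v : injfun A B) : (forall a, sval u a = sval v a) -> u = v.
Proof.
case: u v => [f f_inj] [g g_inj] /= efg.
have ? : f = g by apply: functional_extensionality.
by subst g; rewrite (proof_irrelevance _ f_inj g_inj).
Qed.

Definition injective_on (T U : Type) (D : T -> Prop) (f : T -> U) :=
  forall s t, D s -> D t -> f s = f t -> s = t.

Definition patch (T U : Type) (D : T -> Prop) (f g : T -> U) (t : T) : U :=
  if excluded_middle_informative (D t) then f t else g t.

Lemma patch_in (T U : Type) (D : T -> Prop) (f g : T -> U) t : D t -> patch D f g t = f t.
Proof. by rewrite /patch; case: excluded_middle_informative. Qed.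

Lemma patch_out (T U : Type) (D : T -> Prop) (f g : T -> U) t : ~ D t -> patch D f g t = g t.
Proof. by rewrite /patch; case: excluded_middle_informative. Qed.

Lemma patch_injective (T U : Type) (D : T -> Prop) (f g : T -> U) :
  injective_on D f -> injective_on (fun t => ~ D t) g ->
  (forall s t, D s -> ~ D t -> f s <> g t) -> injective (patch D f g).
Proof.
move=> f_inj g_inj fg s t; rewrite /patch.
case: excluded_middle_informative => Ds; case: excluded_middle_informative => Dt.
- exact: f_inj.
- by move/(fg _ _ Ds Dt).
- by move/esym/(fg _ _ Dt Ds).
- exact: g_inj.
Qed.

Definition holds (P : Prop) : bool := if excluded_middle_informative P then true else false.

Lemma holdsP (P : Prop) : reflect P (holds P).
Proof. by rewrite /holds; case: excluded_middle_informative => h; constructor. Qed.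

(** [coinfinite A] unfolds to [infinite (fun t => ~ A t)]. *)
Definition infinite (P : nat -> Prop) := forall N, exists t, N <= t /\ P t.

Lemma infinite_sub (P Q : nat -> Prop) : (forall t, P t -> Q t) -> infinite P -> infinite Q.
Proof. by move=> PQ infP N; have [t [? /PQ]] := infP N; exists t. Qed.

Lemma infinite_split (P Q0 Q1 : nat -> Prop) : infinite P -> (forall t, Q0 t -> ~ Q1 t) ->
  infinite (fun t => P t /\ ~ Q0 t) \/ infinite (fun t => P t /\ ~ Q1 t).
Proof.
move=> infP Q01; apply: NNPP => /not_or_and [fin0 fin1].
have bounded Q : ~ infinite (fun t => P t /\ ~ Q t) ->
    exists N, forall t, N <= t -> P t -> Q t.
  move=> finQ; apply: NNPP => unb; apply: finQ => N; apply: NNPP => noQ; apply: unb.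
  by exists N => t Nt Pt; apply: NNPP => nQt; apply: noQ; exists t.
have [N0 hN0] := bounded _ fin0; have [N1 hN1] := bounded _ fin1.
have [t [Nt Pt]] := infP (maxn N0 N1); rewrite geq_max in Nt; case/andP: Nt => N0t N1t.
exact: Q01 (hN0 t N0t Pt) (hN1 t N1t Pt).
Qed.

Lemma infinite_range (f : nat -> nat) : injective f -> infinite (fun s => exists t, f t = s).
Proof.
move=> f_inj N; apply: NNPP => bounded.
have lt_fN t : f t < N.
  by rewrite ltnNge; apply/negP => Nft; apply: bounded; exists (f t); split => //; exists t.
pose g (i : 'I_N.+1) : 'I_N := Ordinal (lt_fN i).
have g_inj : injective g by move=> i j [/f_inj /val_inj].
by have := leq_card g g_inj; rewrite !card_ord ltnn.
Qed.

Section Enumeration.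
Variable P : nat -> Prop.

Definition rank (t : nat) : nat := count (fun s => holds (P s)) (iota 0 t).

Lemma rankS t : rank t.+1 = rank t + holds (P t).
Proof. by rewrite /rank -addn1 iotaD count_cat /= addn0. Qed.

Lemma rank_homo : {homo rank : s t / s <= t}.
Proof. by apply: homo_leq => [//||t]; [exact: leq_trans|rewrite rankS leq_addr]. Qed.

Lemma rank_lt s t : P s -> s < t -> rank s < rank t.
Proof. by move=> /holdsP Ps /rank_homo; apply: leq_trans; rewrite rankS Ps addn1. Qed.

Lemma rank_inj : injective_on P rank.
Proof.
move=> s t Ps Pt e; case: (ltngtP s t) => // [/(rank_lt Ps)|/(rank_lt Pt)]; by rewrite e ltnn.
Qed.

Hypothesis infP : infinite P.

Lemma rank_onto i : exists t, P t /\ rank t = i.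
Proof.
have unb j : exists t, j < rank t.
  elim: j => [|j [t jt]].
    by have [s [_ /holdsP Ps]] := infP 0; exists s.+1; rewrite rankS Ps addn1.
  have [s [ts /holdsP Ps]] := infP t; exists s.+1.
  by rewrite rankS Ps addn1 ltnS; apply: leq_trans jt (rank_homo ts).
case: (ex_minnP (unb i)) => [[|s]]; first by rewrite /rank.
rewrite rankS => lt_i min_i; have le_si : rank s <= i.
  by rewrite leqNgt; apply/negP => /min_i; rewrite ltnn.
move: lt_i; case: holdsP => Ps /=; last by rewrite addn0 => /leq_trans/(_ le_si); rewrite ltnn.
by rewrite addn1 ltnS => le_is; exists s; split => //; apply/eqP; rewrite eqn_leq le_si.
Qed.

Definition elem (i : nat) : nat := epsilon (inhabits 0) (fun t => P t /\ rank t = i).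

Lemma elem_spec i : P (elem i) /\ rank (elem i) = i.
Proof. exact: epsilon_spec (rank_onto i). Qed.

Lemma elemP i : P (elem i). Proof. by case: (elem_spec i). Qed.

Lemma rank_elem i : rank (elem i) = i. Proof. by case: (elem_spec i). Qed.

Lemma elem_rank t : P t -> elem (rank t) = t.
Proof. by move=> Pt; apply: rank_inj; rewrite ?rank_elem //; apply: elemP. Qed.

Lemma elem_inj : injective elem.
Proof. by move=> i j eij; rewrite -(rank_elem i) -(rank_elem j) eij. Qed.

End Enumeration.

Lemma infinite_image (P : nat -> Prop) (f : nat -> nat) : infinite P -> injective_on P f ->
  infinite (fun s => exists t, P t /\ f t = s).
Proof.
move=> infP f_inj; have fe_inj : injective (fun i => f (elem P i)).
  by move=> i j /f_inj e; apply: (elem_inj infP); apply: e; apply: elemP.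
apply: infinite_sub (infinite_range fe_inj) => s [i <-].
by exists (elem P i); split => //; apply: elemP.
Qed.

Lemma double_addb_injective (b : bool) : injective (fun s => s.*2 + b).
Proof. by move=> s t /eqP; rewrite eqn_add2r => /eqP/(congr1 half); rewrite !doubleK. Qed.

Lemma extend_injective (T : countType) (D : T -> Prop) (f : T -> nat) (S : nat -> Prop) :
  injective_on D f -> infinite S -> (forall t, D t -> ~ S (f t)) ->
  exists g : injfun T nat, (forall t, D t -> sval g t = f t) /\ (forall t, ~ D t -> S (sval g t)).
Proof.
move=> f_inj infS fS.
have g_inj : injective (patch D f (fun t => elem S (pickle t))).
  apply: patch_injective => // [s t _ _ /(elem_inj infS)/(pcan_inj pickleK)//|s t Ds _ e].
  by apply: (fS s Ds); rewrite e; apply: elemP.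
exists (exist _ _ g_inj); split => t Dt /=; first exact: patch_in.
by rewrite patch_out //; apply: elemP.
Qed.

Lemma coinfinite_image (A : nat -> Prop) (a : M) : coinfinite A ->
  coinfinite (fun s => exists t, A t /\ sval a t = s).
Proof.
move=> coA; apply: infinite_sub (infinite_image coA (fun s t _ _ => svalP a s t)).
by move=> s [t [nAt <-]] [t' [At' /(svalP a) e]]; rewrite e in At'.
Qed.

Lemma extend_bijective (A : nat -> Prop) (a : M) : coinfinite A ->
  exists d : M, (forall t, A t -> sval d t = sval a t) /\ (forall s, exists t, sval d t = s).
Proof.
move=> coA; pose R s := ~ exists t, A t /\ sval a t = s.
have infR : infinite R := coinfinite_image a coA.
pose g t := elem R (rank (fun t => ~ A t) t).
have d_inj : injective (patch A (sval a) g).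
  apply: patch_injective => [s t _ _|s t nAs nAt /(elem_inj infR)|s t As _ e].
  - exact: svalP a s t.
  - exact: rank_inj.
  - by apply: (elemP infR (rank (fun t => ~ A t) t)); exists s; rewrite e.
exists (exist _ _ d_inj); split => [t At|s] /=; first exact: patch_in.
case: (classic (R s)) => [Rs|/NNPP [t [At <-]]]; last by exists t; rewrite patch_in.
pose t := elem (fun t => ~ A t) (rank R s); exists t.
rewrite patch_out; last exact: (elemP coA).
by rewrite /g (rank_elem coA) elem_rank.
Qed.

Lemma factor_injection (A B C : Type) (f : injfun B C) (g : injfun A C) :
  (forall a, exists b, sval f b = sval g a) ->
  exists h : injfun A B, forall a, sval f (sval h a) = sval g a.
Proof.
move=> /choice [h fh]; have h_inj : injective h.
  by move=> a a' e; apply: (svalP g); rewrite -!fh e.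
by exists (exist _ h h_inj).
Qed.

Lemma injective_choice (S : nat -> nat -> Prop) : (forall k, infinite (S k)) ->
  exists x : nat -> nat, (forall k, S k (x k)) /\ injective x.
Proof.
move=> infS; have [next next_spec] : exists next : nat * nat -> nat,
    forall kn, kn.2 < next kn /\ S kn.1 (next kn).
  apply: (choice (fun kn t => kn.2 < t /\ S kn.1 t)) => -[k n].
  by have [t] := infS k n.+1; exists t.
pose fix x k := if k is k'.+1 then next (k, x k') else next (0, 0).
exists x; split=> [[|k]|].
- exact: (next_spec (0, 0)).2.
- exact: (next_spec (k.+1, x k)).2.
- apply/incn_inj/leq_mono/(homo_ltn ltn_trans) => k.
  exact: (next_spec (k.+1, x k)).1.
Qed.

Definition agree (A : nat -> Prop) (u v : M) := forall t, A t -> sval u t = sval v t.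

(** Off [B], [u1] takes values in one parity class [Rb b] of the complement of [u B], chosen so
    that infinitely many points off [B'] avoid it; these points provide the values of [u2] and
    [u3] off [B']. *)
Lemma agree_chain (B B' : nat -> Prop) (u : M) : coinfinite B -> coinfinite B' ->
  fixes (fun t => B t /\ B' t) u ->
  exists u1 u2 u3 : M, [/\ agree B u u1, agree B' u1 u2, agree B u2 u3 & fixes B' u3].
Proof.
move=> coB coB' uBB'; pose R s := ~ exists t, B t /\ sval u t = s.
have infR : infinite R := coinfinite_image u coB.
pose Rb (b : bool) s := R s /\ odd (rank R s) = b.
have [b infZ] : exists b, infinite (fun s => ~ B' s /\ ~ Rb b s).
  have disj s : Rb false s -> ~ Rb true s by move=> [_ e0] [_]; rewrite e0.
  by case: (infinite_split coB' disj); [exists false|exists true].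
have infRb : infinite (Rb b).
  have e_inj : injective (fun i => elem R (i.*2 + b)).
    by move=> i j /(elem_inj infR)/double_addb_injective.
  apply: infinite_sub (infinite_range e_inj) => s [i <-]; split; first exact: elemP.
  by rewrite rank_elem // oddD odd_double oddb.
have [u1 [u1B u1R]] := extend_injective (D := B) (fun s t _ _ => svalP u s t) infRb
  (fun t Bt Rbut => proj1 Rbut (ex_intro _ t (conj Bt erefl))).
have [u3 [u3B' u3Z]] := extend_injective (D := B') (f := id) (fun s t _ _ => id) infZ
  (fun t B't Zt => proj1 Zt B't).
have u2_inj : injective (patch B' (sval u1) (sval u3)).
  apply: patch_injective => [s t _ _|s t _ _|s t B's nB't e].
  - exact: svalP u1 s t.
  - exact: svalP u3 s t.
  - have [nB'u3 nRu3] := u3Z t nB't; rewrite -e in nB'u3 nRu3.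
    case: (classic (B s)) => [Bs|nBs]; last exact: nRu3 (u1R s nBs).
    by apply: nB'u3; rewrite u1B // uBB'.
exists u1, (exist _ _ u2_inj), u3; split => [t Bt|t B't|t Bt|t B't] /=.
- by rewrite u1B.
- by rewrite patch_in.
- case: (classic (B' t)) => [B't|nB't]; last by rewrite patch_out.
  by rewrite patch_in // u1B // u3B' // uBB'.
- exact: u3B'.
Qed.

Lemma ord2_cases (i : 'I_2) : i = ord0 \/ i = ord_max.
Proof. by case: i => -[|[|//]] i2; [left|right]; apply: val_inj. Qed.

Lemma inj2_ext (F G : Inj2) : (forall t, sval F (ord0, t) = sval G (ord0, t)) ->
  (forall t, sval F (ord_max, t) = sval G (ord_max, t)) -> F = G.
Proof. by move=> FG0 FG1; apply: injfun_ext => -[i t]; case: (ord2_cases i) => ->. Qed.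

Lemma slice_injective (F : Inj2) (i : 'I_2) : injective (fun t => sval F (i, t)).
Proof. by move=> s t /(svalP F) []. Qed.

Definition slice (F : Inj2) (i : 'I_2) : M := exist _ _ (@slice_injective F i).

Lemma coinfinite_in_first_image (F : Inj2) (B : nat -> Prop) :
  (forall s, B s -> exists t, sval F (ord0, t) = s) -> coinfinite B.
Proof.
move=> BF; apply: infinite_sub (infinite_range (svalP (slice F ord_max))).
by move=> s [t <-] /BF [t' /(svalP F)].
Qed.

Lemma exists_inj2_fixing (A : nat -> Prop) : coinfinite A ->
  exists s : Inj2, fixes A (comp_inj s iota1).
Proof.
move=> coA; pose D (q : 'I_2 * nat) := q.1 = ord0 /\ A q.2.
have D_inj : injective_on D snd by move=> [i t] [i' t'] [/= -> _] [/= -> _] /= ->.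
have [s [sA _]] := extend_injective D_inj coA (fun q Dq nAq => nAq Dq.2).
by exists s => t At; apply: (sA (ord0, t)).
Qed.

(** [K] is the identity on the values of [P (0, s (0, _))] and agrees with [P] on [{1} x nat];
    its remaining values are taken among those of [P (0, s (1, _))]. *)
Lemma normal_form_vertex (P s : Inj2) : exists K : Inj2,
  comp_inj K (coprod (comp_inj (comp_inj P iota1) (comp_inj s iota1)) idM) =
  comp_inj P (coprod (comp_inj s iota1) idM).
Proof.
pose w := comp_inj (comp_inj P iota1) (comp_inj s iota1).
pose D (q : 'I_2 * nat) := q.1 = ord_max \/ exists t, q = (ord0, sval w t).
pose f (q : 'I_2 * nat) := if q.1 == ord0 then q.2 else sval P q.
pose S v := exists n, sval P (ord0, sval s (ord_max, n)) = v.
have f_inj : injective_on D f.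
  move=> [i u] [i' u'] [/= ->|[t [-> ->]]] [/= ->|[t' [-> ->]]]; rewrite /f /=.
  - by move/(svalP P).
  - by move/(svalP P).
  - by move/(svalP P).
  - by move->.
have infS : infinite S.
  apply: infinite_sub (infinite_range (f := fun n => sval P (ord0, sval s (ord_max, n))) _) => //.
  by move=> n n' /(svalP P) [] /(svalP s) [].
have fS q : D q -> ~ S (f q).
  case: q => i u [/= ->|[t [-> ->]]] [n] /=; first by move/(svalP P).
  by move/(svalP P) => [] /(svalP s).
have [K [KD _]] := extend_injective f_inj infS fS.
exists K; apply: inj2_ext => t /=; rewrite KD /f //; [by right; exists t|by left].
Qed.

Definition refines (B : nat -> Prop) (F G : Inj2) :=
  exists c d : M, fixes B c /\ comp_inj F (coprod c d) = G.

Lemma refines_of_image (B : nat -> Prop) (F G : Inj2) :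
  (forall t, B t -> sval F (ord0, t) = sval G (ord0, t)) ->
  (forall i s, exists t, sval F (i, t) = sval G (i, s)) -> refines B F G.
Proof.
move=> FG_B FG.
have [c Fc] := factor_injection (f := slice F ord0) (g := slice G ord0) (FG ord0).
have [d Fd] := factor_injection (f := slice F ord_max) (g := slice G ord_max) (FG ord_max).
exists c, d; split; last exact: inj2_ext.
by move=> t Bt; apply: (svalP (slice F ord0)); rewrite Fc /= FG_B.
Qed.

Section Zigzag.
Variables (B : nat -> Prop) (K L : Inj2).
Hypotheses (coB : coinfinite B) (KB : fixes B (comp_inj K iota1))
  (LB : fixes B (comp_inj L iota1)).

Let F (b : bool) := if b then L else K.
Let comp (c : bool) : 'I_2 := if c then ord_max else ord0.
(** [free c t]: the point [(comp c, t)] lies outside [{0} x B], where [K] and [L] are the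
    identity. *)
Let free (c : bool) t := c \/ ~ B t.

Lemma zigzag_fix b t : B t -> sval (F b) (ord0, t) = t.
Proof. by case: b; [apply: LB|apply: KB]. Qed.

Lemma zigzag_free_notin b c t : free c t -> ~ B (sval (F b) (comp c, t)).
Proof.
move=> ct BFt; have /(svalP (F b)) [c0 Ft] := zigzag_fix b BFt.
rewrite Ft in BFt; case: c ct c0 {Ft} => [_|[//|nBt _]]; first by rewrite /comp.
exact: nBt.
Qed.

Let S k v := exists t, free (odd k) t /\ sval (F (odd k./2)) (comp (odd k), t) = v.

Lemma zigzag_family_infinite k : infinite (S k).
Proof.
apply: infinite_image => [|s t _ _]; last exact: slice_injective.
case: (odd k) => N; first by exists N; split; [|left].
by have [t [Nt nBt]] := coB N; exists t; split; [|right].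
Qed.

Section Interleaving.
Variable x : nat -> nat.
Hypotheses (xS : forall k, S k (x k)) (x_inj : injective x).

Let C t := ~ B t.
(** [N] sends [(0, t)], [t] not in [B], to [x (2 rank t)] and [(1, s)] to [x (2 s + 1)]; by the
    choice of [S], the indices [4 i + 2 b] and [4 i + 2 b + 1] are free values of [F b] on the
    two components, which is what the refinements [G b] of [N] pick out. *)
Let code (q : 'I_2 * nat) := if q.1 == ord0 then (rank C q.2).*2 else q.2.*2.+1.

Lemma zigzag_x_notin k : ~ B (x k).
Proof. by have [t [ct <-]] := xS k; apply: zigzag_free_notin. Qed.

Lemma zigzag_N_injective :
  injective (patch (fun q => q.1 = ord0 /\ B q.2) snd (fun q => x (code q))).
Proof.
apply: patch_injective.
- by move=> [i s] [i' t] [/= -> _] [/= -> _] /= ->.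
- move=> [i s] [i' t] /= out_s out_t /x_inj; rewrite /code /=.
  case: (ord2_cases i) out_s => -> out_s; case: (ord2_cases i') out_t => -> out_t //=.
  + have Cs : C s by move=> Bs; apply: out_s.
    have Ct : C t by move=> Bt; apply: out_t.
    by move=> /(congr1 half); rewrite !doubleK => /(rank_inj Cs Ct) ->.
  + by move=> /(congr1 odd); rewrite /= !odd_double.
  + by move=> /(congr1 odd); rewrite /= !odd_double.
  + by move=> [] /(congr1 half); rewrite !doubleK => ->.
- by move=> q q' [_ Bq] _ e; apply: (@zigzag_x_notin (code q')); rewrite -e.
Qed.

Let N : Inj2 := exist _ _ zigzag_N_injective.

Lemma zigzag_N_fix t : B t -> sval N (ord0, t) = t.
Proof. by move=> Bt; rewrite /= patch_in. Qed.

Lemma zigzag_N_code q : ~ (q.1 = ord0 /\ B q.2) -> sval N q = x (code q).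
Proof. exact: patch_out. Qed.

Lemma zigzag_shift_injective (b : bool) :
  injective (patch B id (fun t => elem C ((rank C t).*2 + b))).
Proof.
apply: patch_injective => [s t _ _ //|s t Cs Ct /(elem_inj coB)/double_addb_injective|s t Bs _ e].
- exact: rank_inj.
- by apply: (elemP coB ((rank C t).*2 + b)); rewrite -e.
Qed.

Let e (b : bool) : M := exist _ _ (@zigzag_shift_injective b).
Let delta (b : bool) : M := exist _ _ (@double_addb_injective b).
Let G (b : bool) : Inj2 := comp_inj N (coprod (e b) (delta b)).

Lemma zigzag_refines_N b : refines B N (G b).
Proof. by exists (e b), (delta b); split => // t Bt; rewrite /= patch_in. Qed.

Lemma zigzag_x_image k : exists t, sval (F (odd k./2)) (comp (odd k), t) = x k.
Proof. by have [t [_ <-]] := xS k; exists t. Qed.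

Lemma zigzag_G_first b t : sval (G b) (ord0, t) = sval N (ord0, sval (e b) t).
Proof. by []. Qed.

Lemma zigzag_G_second b s : sval (G b) (ord_max, s) = sval N (ord_max, s.*2 + b).
Proof. by []. Qed.

Lemma zigzag_e_fix b t : B t -> sval (e b) t = t.
Proof. exact: patch_in. Qed.

Lemma zigzag_e_out b t : ~ B t -> sval (e b) t = elem C ((rank C t).*2 + b).
Proof. exact: patch_out. Qed.

Lemma zigzag_refines_F b : refines B (F b) (G b).
Proof.
apply: refines_of_image => [t Bt|i s].
  by rewrite zigzag_fix // zigzag_G_first zigzag_e_fix // zigzag_N_fix.
case: (ord2_cases i) => ->.
- case: (classic (B s)) => [Bs|Cs].
    by exists s; rewrite zigzag_fix // zigzag_G_first zigzag_e_fix // zigzag_N_fix.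
  rewrite zigzag_G_first zigzag_e_out // zigzag_N_code /code /=; last first.
    by case=> _; apply: (elemP coB).
  have := zigzag_x_image ((rank C s).*2 + b).*2.
  by rewrite rank_elem // odd_double doubleK oddD odd_double oddb.
- rewrite zigzag_G_second zigzag_N_code /code //=; last by case.
  have := zigzag_x_image (s.*2 + b).*2.+1.
  by rewrite /= odd_double uphalf_double oddD odd_double oddb.
Qed.

End Interleaving.

Lemma refines_zigzag : exists N G G' : Inj2,
  [/\ refines B K G, refines B N G, refines B N G' & refines B L G'].
Proof.
have [x [xS x_inj]] := injective_choice zigzag_family_infinite.
exists (exist _ _ (zigzag_N_injective xS x_inj)).
do 2 eexists; split.
- exact: (zigzag_refines_F xS x_inj false).
- exact: (zigzag_refines_N xS x_inj false).
- exact: (zigzag_refines_N xS x_inj true).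
- exact: (zigzag_refines_F xS x_inj true).
Qed.

End Zigzag.

Section Supports.
Variable X : EMsSet.

Lemma act_ext m (u v : 'I_m.+1 -> M) (z : X m) :
  (forall j t, sval (u j) t = sval (v j) t) -> act u z = act v z.
Proof. by move=> uv; congr act; apply: functional_extensionality => j; apply: injfun_ext. Qed.

Definition supported m (z : X m) (A : 'I_m.+1 -> nat -> Prop) :=
  forall u : 'I_m.+1 -> M, (forall j, fixes (A j) (u j)) -> act u z = z.

Lemma supported_of_k_supported m (z : X m) A :
  (forall k, k_supported z k (A k)) -> supported z A.
Proof.
move=> zA u uA; pose trunc r (j : 'I_m.+1) := if j < r then u j else idM.
have trunc_fix r : act (trunc r) z = z.
  elim: r => [|r IH]; first by rewrite -[RHS]act_id; apply: act_ext => j t; rewrite /trunc ltn0.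
  case: (ltnP r m.+1) => [lt_rm|le_mr]; last first.
    rewrite -[RHS]IH; apply: act_ext => j t; have jr := leq_trans (ltn_ord j) le_mr.
    by rewrite /trunc jr ltnS (ltnW jr).
  pose k := Ordinal lt_rm; transitivity (act (incl k (u k)) (act (trunc r) z)).
    rewrite act_mul; apply: act_ext => j t; rewrite /incl /trunc /=.
    case: (eqVneq j k) => [->|njk] /=; first by rewrite ltnSn ltnn.
    have njr : (j : nat) != r by apply: contra njk => /eqP jr; apply/eqP/val_inj.
    by rewrite ltnS leq_eqVlt (negPf njr).
  by rewrite IH zA.
by rewrite -[RHS](trunc_fix m.+1); apply: act_ext => j t; rewrite /trunc ltn_ord.
Qed.

Lemma mild_supported : mild X ->
  forall m (z : X m), exists A, (forall j, coinfinite (A j)) /\ supported z A.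
Proof.
move=> mX m z; have /choice [A hA] := mX m z.
by exists A; split => [j|]; [case: (hA j)|apply: supported_of_k_supported => k; case: (hA k)].
Qed.

Lemma act_through m (z : X m) A (a d : 'I_m.+1 -> M) : supported z A ->
  (forall j, exists s : M, fixes (A j) s /\ forall t, sval (d j) (sval s t) = sval (a j) t) ->
  act a z = act d z.
Proof.
move=> zA /choice [s hs]; rewrite -[in RHS](zA s) => [|j]; last by case: (hs j).
by rewrite act_mul; apply: act_ext => j t /=; case: (hs j) => _ ->.
Qed.

(** Factor both [a] and [b] through a bijection extending [a] on [A]. *)
Lemma act_agree m (z : X m) A (a b : 'I_m.+1 -> M) : (forall j, coinfinite (A j)) ->
  supported z A -> (forall j, agree (A j) (a j) (b j)) -> act a z = act b z.
Proof.
move=> coA zA ab; have /choice [d hd] := fun j => extend_bijective (a j) (coA j).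
have through c : (forall j, agree (A j) (d j) (c j)) -> act c z = act d z.
  move=> dc; apply: (act_through zA) => j.
  have [s ds] := factor_injection (f := d j) (g := c j) (fun t => (hd j).2 (sval (c j) t)).
  by exists s; split => // t At; apply: (svalP (d j)); rewrite ds dc.
by rewrite (through a) ?(through b) // => j t At; rewrite (hd j).1 // ab.
Qed.

Lemma supported_meet m (z : X m) B B' : (forall j, coinfinite (B j)) ->
  (forall j, coinfinite (B' j)) -> supported z B -> supported z B' ->
  supported z (fun j t => B j t /\ B' j t).
Proof.
move=> coB coB' zB zB' u uBB'.
have /choice [w hw] : forall j, exists w : M * M * M, [/\ agree (B j) (u j) w.1.1,
    agree (B' j) w.1.1 w.1.2, agree (B j) w.1.2 w.2 & fixes (B' j) w.2].
  by move=> j; have [u1 [u2 [u3 ?]]] := agree_chain (coB j) (coB' j) (uBB' j); exists (u1, u2, u3).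
transitivity (act (fun j => (w j).1.1) z); first by apply: (act_agree coB zB) => j; case: (hw j).
transitivity (act (fun j => (w j).1.2) z); first by apply: (act_agree coB' zB') => j; case: (hw j).
transitivity (act (fun j => (w j).2) z); first by apply: (act_agree coB zB) => j; case: (hw j).
by apply: zB' => j; case: (hw j).
Qed.

End Supports.

Section OperadicProduct.
Variable X : EMsSet.

Lemma prod_equiv_trans m (y1 y2 y3 : PreProd X m) :
  prod_equiv y1 y2 -> prod_equiv y2 y3 -> prod_equiv y1 y3.
Proof. exact: rst_trans. Qed.

Lemma prod_equiv_sym m (y1 y2 : PreProd X m) : prod_equiv y1 y2 -> prod_equiv y2 y1.
Proof. exact: rst_sym. Qed.

Lemma prod_equiv_act m (F : 'I_m.+1 -> Inj2) (u v : 'I_m.+1 -> M) (x : X m) :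
  prod_equiv (F, act u x, tt) (fun j => comp_inj (F j) (coprod (u j) (v j)), x, tt).
Proof. by apply: rst_step; exists F, u, v, x. Qed.

Lemma star_module_mild : star_module X -> mild X.
Proof.
move=> sX n x k; have [[[F x'] []] <-] := (sX n).1 x.
exists (fun s => exists t, sval (F k) (ord0, t) = s); split.
  by apply: (@coinfinite_in_first_image (F k)).
move=> u uF; rewrite /Phi act_mul; apply: act_ext => j t /=; rewrite /incl.
by case: eqP => [->|//]; apply: uF; exists t.
Qed.

Lemma mild_Phi_onto : mild X -> forall m (x : X m), exists y : PreProd X m, Phi y = x.
Proof.
move=> mX m x; have [A [coA xA]] := mild_supported mX x.
have /choice [s sA] := fun j => exists_inj2_fixing (coA j).
by exists (s, x, tt); apply: xA.
Qed.

Lemma Phi_supported m (p : 'I_m.+1 -> Inj2) (z : X m) A : (forall j, coinfinite (A j)) ->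
  supported z A ->
  supported (Phi (p, z, tt)) (fun j s => exists t, A j t /\ sval (p j) (ord0, t) = s).
Proof.
move=> coA zA u up; rewrite /Phi act_mul; apply: (act_agree coA zA) => j t At /=.
by apply: up; exists t.
Qed.

Lemma prod_equiv_normal m (p : 'I_m.+1 -> Inj2) (z : X m) A : (forall j, coinfinite (A j)) ->
  supported z A -> exists K : 'I_m.+1 -> Inj2, prod_equiv (p, z, tt) (K, Phi (p, z, tt), tt) /\
  forall j t, A j t -> sval (K j) (ord0, sval (p j) (ord0, t)) = sval (p j) (ord0, t).
Proof.
move=> coA zA; have /choice [s sA] := fun j => exists_inj2_fixing (coA j).
pose a j := comp_inj (s j) iota1; pose w j := comp_inj (comp_inj (p j) iota1) (a j).
have /choice [K Kw] := fun j => normal_form_vertex (p j) (s j).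
exists K; split; last first.
  move=> j t At; have sAt : sval (s j) (ord0, t) = t := sA j t At.
  by have := congr1 (fun g => sval g (ord0, t)) (Kw j); rewrite /= /coprod_fun /= sAt.
have pa : prod_equiv (p, z, tt) (fun j => comp_inj (p j) (coprod (a j) idM), z, tt).
  by have := prod_equiv_act p a (fun=> idM) z; rewrite zA.
have Ka : prod_equiv (K, Phi (p, z, tt), tt) (fun j => comp_inj (p j) (coprod (a j) idM), z, tt).
  have -> : Phi (p, z, tt) = act w z by rewrite -act_mul zA.
  by rewrite -(functional_extensionality _ _ Kw); apply: prod_equiv_act.
exact: prod_equiv_trans pa (prod_equiv_sym Ka).
Qed.

Lemma prod_equiv_refines m (y : X m) B (F G : 'I_m.+1 -> Inj2) : supported y B ->
  (forall j, refines (B j) (F j) (G j)) -> prod_equiv (F, y, tt) (G, y, tt).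
Proof.
move=> yB /choice [c /choice [d cd]].
have -> : G = fun j => comp_inj (F j) (coprod (c j) (d j)).
  by apply: functional_extensionality => j; case: (cd j).
by have := prod_equiv_act F c d y; rewrite yB // => j; case: (cd j).
Qed.

Lemma prod_equiv_fixing m (y : X m) B (K L : 'I_m.+1 -> Inj2) : (forall j, coinfinite (B j)) ->
  supported y B -> (forall j, fixes (B j) (comp_inj (K j) iota1)) ->
  (forall j, fixes (B j) (comp_inj (L j) iota1)) -> prod_equiv (K, y, tt) (L, y, tt).
Proof.
move=> coB yB KB LB.
have /choice [N /choice [G /choice [G' zz]]] := fun j => refines_zigzag (coB j) (KB j) (LB j).
have KG : prod_equiv (K, y, tt) (G, y, tt) by apply: prod_equiv_refines yB _ => j; case: (zz j).
have NG : prod_equiv (N, y, tt) (G, y, tt) by apply: prod_equiv_refines yB _ => j; case: (zz j).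
have NG' : prod_equiv (N, y, tt) (G', y, tt) by apply: prod_equiv_refines yB _ => j; case: (zz j).
have LG' : prod_equiv (L, y, tt) (G', y, tt) by apply: prod_equiv_refines yB _ => j; case: (zz j).
apply: prod_equiv_trans KG (prod_equiv_trans (prod_equiv_sym NG) _).
exact: prod_equiv_trans NG' (prod_equiv_sym LG').
Qed.

End OperadicProduct.

Theorem theorem2p24 (X : EMsSet) : star_module X <-> mild X.
Proof.
split=> [|mX m]; first exact: star_module_mild.
split=> [|[[p z] []] [[q z'] []] Phi_pq]; first exact: mild_Phi_onto.
have [A [coA zA]] := mild_supported mX z.
have [A' [coA' zA']] := mild_supported mX z'.
have [K [pK Kfix]] := prod_equiv_normal p coA zA.
have [L [qL Lfix]] := prod_equiv_normal q coA' zA'.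
rewrite -Phi_pq in qL; set y := Phi (p, z, tt) in pK qL *.
pose B j s := exists t, A j t /\ sval (p j) (ord0, t) = s.
pose B' j s := exists t, A' j t /\ sval (q j) (ord0, t) = s.
have coB j : coinfinite (B j) := coinfinite_image (comp_inj (p j) iota1) (coA j).
have coB' j : coinfinite (B' j) := coinfinite_image (comp_inj (q j) iota1) (coA' j).
have yB' : supported y B' by rewrite /y Phi_pq; apply: Phi_supported.
have KL : prod_equiv (K, y, tt) (L, y, tt).
  apply: (prod_equiv_fixing (B := fun j s => B j s /\ B' j s)).
  - by move=> j; apply: infinite_sub (coB j) => s nBs [].
  - by apply: (supported_meet coB coB' _ yB'); apply: Phi_supported.
  - by move=> j _ [[t [At <-]] _]; apply: Kfix.
  - by move=> j _ [_ [t [At <-]]]; apply: Lfix.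
exact: prod_equiv_trans pK (prod_equiv_trans KL (prod_equiv_sym qL)).
Qed.
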